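(* Let $p$ be a prime number and $k,N$ positive integers. Suppose that integers $n,m\geq N$ satisfy $n\equiv m\pmod{\varphi(p^N)}$. Then \[ C^{(-k)}_{n}\equiv C^{(-k)}_{m}\pmod{p^N}. \]
   Context: For any integer $k$, let $\mathrm{Li}_k(t)=\sum_{n=1}^{\infty} t^n/n^k$. The poly-Bernoulli numbers of type $C$, $C^{(k)}_n$ ($n\ge0$), are defined by $\frac{\mathrm{Li}_k(1-e^{-t})}{e^{t}-1}=\sum_{n=0}^{\infty}C^{(k)}_n\frac{t^n}{n!}$. For negative upper index these are integers. $\varphi$ denotes Euler's totient function, so $\varphi(p^N)=p^{N-1}(p-1)$. *)

From HB Require Import structures.
From mathcomp Require Import all_boot all_order all_algebra.
Set Implicit Arguments. Unset Strict Implicit. Unset Printing Implicit Defensive.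
Import Order.TTheory GRing.Theory Num.Theory.
Local Open Scope ring_scope.

Definition fps := nat -> rat.

Definition fps_one : fps := fun n => (n == 0%N)%:R.

Definition fps_mul (f g : fps) : fps :=
  fun n => \sum_(i < n.+1) f i * g (n - i)%N.

Fixpoint fps_pow (f : fps) (j : nat) : fps :=
  match j with
  | 0%N => fps_one
  | j'.+1 => fps_mul f (fps_pow f j')
  end.

Definition fps_exp : fps := fun n => (n`!%:R)^-1.
Definition fps_expneg : fps := fun n => (-1) ^+ n / n`!%:R.

Definition one_minus_expneg : fps := fun n => fps_one n - fps_expneg n.

Definition expm1 : fps := fun n => fps_exp n - fps_one n.

(* Li_k(f) = sum_{j>=1} f^j / j^k, for a series f with zero constant term
   (then f^j has no terms of degree < j, so the coefficient of t^n only
   involves j <= n). Here k is any integer. *)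
Definition Li_comp (k : int) (f : fps) : fps :=
  fun n => \sum_(1 <= j < n.+1) ((j%:R : rat) ^ (- k)) * fps_pow f j n.

(* Quotient f / g of series when g has zero constant term and g 1 <> 0
   (and f 0 = 0): q is the unique series with q * g = f, computed by
   q_n = (f_{n+1} - sum_{i<n} q_i g_{n+1-i}) / g_1.
   div_v1_seq f g n is the list [q_0; ...; q_n]. *)
Fixpoint div_v1_seq (f g : fps) (n : nat) : seq rat :=
  match n with
  | 0%N => [:: f 1%N / g 1%N]
  | n'.+1 =>
      let s := div_v1_seq f g n' in
      rcons s ((f n.+1 - \sum_(i < n) s`_i * g (n.+1 - i)%N) / g 1%N)
  end.

Definition fps_div_v1 (f g : fps) : fps := fun n => nth 0 (div_v1_seq f g n) n.

Definition polyBernC (k : int) (n : nat) : rat :=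
  n`!%:R * fps_div_v1 (Li_comp k one_minus_expneg) expm1 n.

(* Put x = 1 - e^{-t}. Pascal's rule gives (1 - x) sum_j C(j, l+1) x^j = x sum_j C(j, l) x^j,
   so sum_j C(j, l) x^j = x^l / (1 - x)^(l+1) = (e^t - 1)^l e^t. Expanding
   j^k = sum_l l! S(k, l) C(j, l) then yields
   Li_{-k}(x) / (e^t - 1) = sum_{l < k} (l+1)! S(k, l+1) (e^t - 1)^l e^t,
   an integer combination of exponentials e^{a t} with a a natural number.
   Hence C^(-k)_n = sum_a c_a a^n with c_a integers, and a^n = a^m (mod p^N):
   by Euler's theorem when p does not divide a, and because both sides vanish
   when p divides a, as n, m >= N. *)
From HB Require Import structures.
From mathcomp Require Import all_boot all_order all_algebra cyclic zify ring.
From Stdlib Require Import FunctionalExtensionality.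
Import Order.TTheory GRing.Theory Num.Theory.
Local Open Scope ring_scope.

(* Commutativity and associativity of [fps_mul] are inherited from [{poly rat}]. *)
Definition fps_trunc (N : nat) (f : fps) : {poly rat} := \poly_(i < N.+1) f i.

Lemma fps_mul_trunc f g N n :
  (n <= N)%N -> fps_mul f g n = (fps_trunc N f * fps_trunc N g)`_n.
Proof.
move=> le_nN; rewrite coefM /fps_mul; apply: eq_bigr => i _.
rewrite !coef_poly !ltnS leq_subLR (leq_trans le_nN (leq_addl _ _)).
by rewrite (leq_trans _ le_nN) // -ltnS.
Qed.

Lemma coef_trunc_fps_mul f g N n : (n <= N)%N ->
  (fps_trunc N (fps_mul f g))`_n = (fps_trunc N f * fps_trunc N g)`_n.
Proof. by move=> le_nN; rewrite coef_poly ltnS le_nN; exact: fps_mul_trunc. Qed.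

Lemma coefMr_eq (A B C : {poly rat}) n :
  (forall i, (i <= n)%N -> A`_i = B`_i) -> (C * A)`_n = (C * B)`_n.
Proof. by move=> eqAB; rewrite !coefM; apply: eq_bigr => i _; rewrite eqAB // leq_subr. Qed.

Lemma fps_mulC f g : fps_mul f g = fps_mul g f.
Proof.
by apply: functional_extensionality => n; rewrite !(@fps_mul_trunc _ _ n n (leqnn n)) mulrC.
Qed.

Lemma fps_mulA f g h : fps_mul f (fps_mul g h) = fps_mul (fps_mul f g) h.
Proof.
apply: functional_extensionality => n; rewrite !(@fps_mul_trunc _ _ n n (leqnn n)).
have trunc_mulE u v i : (i <= n)%N ->
    (fps_trunc n (fps_mul u v))`_i = (fps_trunc n u * fps_trunc n v)`_i.
  exact: coef_trunc_fps_mul.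
rewrite (@coefMr_eq _ _ _ _ (trunc_mulE g h)).
rewrite [fps_trunc n (fps_mul f g) * _]mulrC (@coefMr_eq _ _ _ _ (trunc_mulE f g)).
by rewrite [fps_trunc n h * _]mulrC mulrA.
Qed.

Lemma fps_mul1 f : fps_mul fps_one f = f.
Proof.
apply: functional_extensionality => n.
rewrite /fps_mul big_ord_recl /= subn0 mul1r big1 ?addr0 // => i _.
by rewrite mul0r.
Qed.

Lemma fps_mulBl f g h :
  fps_mul (fun n => f n - g n) h = (fun n => fps_mul f h n - fps_mul g h n).
Proof.
apply: functional_extensionality => n; rewrite /fps_mul -sumrB.
by apply: eq_bigr => i _; rewrite mulrBl.
Qed.

Definition expser (a : rat) : fps := fun n => a ^+ n / n`!%:R.

Lemma fact_rat_neq0 n : (n`!%:R : rat) != 0.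
Proof. by rewrite pnatr_eq0 -lt0n fact_gt0. Qed.

Lemma expserD a b : fps_mul (expser a) (expser b) = expser (a + b).
Proof.
apply: functional_extensionality => n.
rewrite /fps_mul /expser addrC exprDn mulr_suml; apply: eq_bigr => i _.
have le_in : (i <= n)%N by rewrite -ltnS.
have -> : (n`!%:R : rat) = 'C(n, i)%:R * (i`!%:R * (n - i)`!%:R).
  by rewrite -!natrM bin_fact.
have binC_neq0 : ('C(n, i)%:R : rat) != 0 by rewrite pnatr_eq0 -lt0n bin_gt0.
by rewrite -mulr_natr; field; rewrite !fact_rat_neq0 binC_neq0.
Qed.

Lemma expser0 : expser 0 = fps_one.
Proof.
apply: functional_extensionality => -[|n]; rewrite /expser /fps_one.
  by rewrite divr1.
by rewrite expr0n mul0r.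
Qed.

Lemma expm1E : expm1 = (fun n => expser 1 n - fps_one n).
Proof.
by apply: functional_extensionality => n; rewrite /expser expr1n mul1r.
Qed.

Lemma one_minus_expnegE :
  one_minus_expneg = (fun n => fps_one n - expser (-1) n).
Proof. by []. Qed.

Definition fps_order_ge (f : fps) (a : nat) := forall i, (i < a)%N -> f i = 0.

Lemma fps_order_ge_mul f g a b :
  fps_order_ge f a -> fps_order_ge g b -> fps_order_ge (fps_mul f g) (a + b).
Proof.
move=> f_a g_b n lt_n_ab; rewrite /fps_mul big1 // => i _.
have [lt_ia | le_ai] := ltnP i a; first by rewrite f_a // mul0r.
by rewrite g_b ?mulr0 //; move: (ltn_ord i); lia.
Qed.

Local Notation X := one_minus_expneg.

Lemma fps_order_ge_powX j : fps_order_ge (fps_pow X j) j.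
Proof.
elim: j => [|j IHj] //; rewrite -add1n; apply: fps_order_ge_mul IHj.
by case=> // _; rewrite /one_minus_expneg /fps_one /fps_expneg expr0 divr1 subrr.
Qed.

Definition graded (F : nat -> fps) := forall j, fps_order_ge (F j) j.

(* The formal sum of the [a j *: F j], which is well defined when [F] is graded. *)
Definition fps_series (a : nat -> rat) (F : nat -> fps) : fps :=
  fun n => \sum_(j < n.+1) a j * F j n.

Section GradedSeries.

Variable F : nat -> fps.
Hypothesis F_graded : graded F.

Lemma fps_series_widen a n M : (n < M)%N ->
  fps_series a F n = \sum_(j < M) a j * F j n.
Proof.
move=> lt_nM; rewrite /fps_series -!(big_mkord xpredT (fun j => a j * F j n)).
rewrite (@big_cat_nat _ _ _ n.+1 0 M _ _ (leq0n _) lt_nM) /= [Y in _ + Y]big1_seq ?addr0 //.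
by move=> j /andP[_]; rewrite mem_index_iota => /andP[lt_nj _]; rewrite F_graded ?mulr0.
Qed.

Lemma fps_mul_series h a :
  fps_mul h (fps_series a F) = fps_series a (fun j => fps_mul h (F j)).
Proof.
apply: functional_extensionality => n; rewrite {1}/fps_mul.
under eq_bigr => i _ do rewrite (@fps_series_widen a _ n.+1) ?ltnS ?leq_subr // mulr_sumr.
rewrite exchange_big; apply: eq_bigr => j _; rewrite /fps_mul mulr_sumr.
by apply: eq_bigr => i _; rewrite mulrCA.
Qed.

Lemma fps_series_shift a :
  fps_series a (fun j => F j.+1) =
  fps_series (fun j => if j is j'.+1 then a j' else 0) F.
Proof.
apply: functional_extensionality => n; rewrite /fps_series.
rewrite big_ord_recr /= F_graded // mulr0 addr0.
by rewrite big_ord_recl /= mul0r add0r.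
Qed.

End GradedSeries.

Lemma eq_fps_series a b F : a =1 b -> fps_series a F = fps_series b F.
Proof.
move=> eq_ab; apply: functional_extensionality => n.
by apply: eq_bigr => j _; rewrite eq_ab.
Qed.

Lemma fps_seriesB a b F n :
  fps_series (fun j => a j - b j) F n = fps_series a F n - fps_series b F n.
Proof. by rewrite /fps_series -sumrB; apply: eq_bigr => j _; rewrite mulrBl. Qed.

Lemma fps_series_sum K c b F n :
  fps_series (fun j => \sum_(l < K) c l * b l j) F n =
  \sum_(l < K) c l * fps_series (b l) F n.
Proof.
rewrite /fps_series; under eq_bigr => j _ do rewrite mulr_suml.
rewrite exchange_big; apply: eq_bigr => l _; rewrite mulr_sumr.
by apply: eq_bigr => j _; rewrite mulrA.
Qed.

Lemma fps_series_delta0 F : fps_series (fun j => (j == 0)%N%:R) F = F 0%N.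
Proof.
apply: functional_extensionality => n.
by rewrite /fps_series big_ord_recl /= mul1r big1 ?addr0 // => j _; rewrite mul0r.
Qed.

Definition binom_series (l : nat) : fps :=
  fps_series (fun j => 'C(j, l)%:R) (fps_pow X).

Lemma expneg_mul f : fps_mul fps_expneg f = (fun n => f n - fps_mul X f n).
Proof.
have -> : fps_expneg = (fun n => fps_one n - X n).
  by apply: functional_extensionality => n; rewrite /one_minus_expneg opprB addrC subrK.
by rewrite fps_mulBl fps_mul1.
Qed.

Lemma X_mul_binom_series l : fps_mul X (binom_series l) =
  fps_series (fun j => if j is j'.+1 then 'C(j', l)%:R else 0) (fps_pow X).
Proof.
rewrite /binom_series fps_mul_series; last exact: fps_order_ge_powX.
exact: (@fps_series_shift _ fps_order_ge_powX).
Qed.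

Lemma expneg_mul_binom_series0 : fps_mul fps_expneg (binom_series 0) = fps_one.
Proof.
transitivity (fps_series (fun j => (j == 0)%N%:R) (fps_pow X));
  last exact: fps_series_delta0.
rewrite expneg_mul X_mul_binom_series; apply: functional_extensionality => n.
rewrite -fps_seriesB; congr (fps_series _ _ n); apply: functional_extensionality.
by case=> [|j]; rewrite !bin0 ?subr0 ?subrr.
Qed.

Lemma expneg_mul_binom_seriesS l :
  fps_mul fps_expneg (binom_series l.+1) = fps_mul X (binom_series l).
Proof.
rewrite expneg_mul !X_mul_binom_series; apply: functional_extensionality => n.
rewrite -fps_seriesB; congr (fps_series _ _ n); apply: functional_extensionality.
by case=> [|j]; rewrite ?bin0n ?subrr // binS natrD addrC addKr.
Qed.

Lemma expser1_mul_expneg f : fps_mul (expser 1) (fps_mul fps_expneg f) = f.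
Proof. by rewrite fps_mulA (expserD 1 (-1)) subrr expser0 fps_mul1. Qed.

Lemma expser1_mul_X : fps_mul (expser 1) X = expm1.
Proof.
rewrite one_minus_expnegE fps_mulC -expser0 fps_mulBl.
by rewrite !(fps_mulC _ (expser 1)) !expserD addr0 subrr expser0 expm1E.
Qed.

Lemma binom_series0 : binom_series 0 = expser 1.
Proof.
by rewrite -(expser1_mul_expneg (binom_series 0)) expneg_mul_binom_series0 fps_mulC fps_mul1.
Qed.

Lemma binom_seriesS l : binom_series l.+1 = fps_mul expm1 (binom_series l).
Proof.
rewrite -(expser1_mul_expneg (binom_series l.+1)) expneg_mul_binom_seriesS.
by rewrite fps_mulA expser1_mul_X.
Qed.

(* [surj k l = l! S(k, l)] is the number of surjections from a k-set onto an l-set. *)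
Fixpoint surj (k l : nat) : nat :=
  if k is k'.+1 then l * (surj k' l + surj k' l.-1) else (l == 0%N).

Lemma surj_eq0 k l : (k < l)%N -> surj k l = 0%N.
Proof. by elim: k l => [|k IHk] [|l] //= lt_kl; rewrite !IHk //; lia. Qed.

Lemma expn_surj_binomial j k : (j ^ k = \sum_(l < k.+1) surj k l * 'C(j, l))%N.
Proof.
elim: k => [|k IHk]; first by rewrite big_ord1 bin0.
have mul_bin l : (j * 'C(j, l) = l * 'C(j, l) + l.+1 * 'C(j, l.+1))%N.
  rewrite mul_bin_left -mulnDl; have [le_lj | lt_jl] := leqP l j.
    by rewrite subnKC.
  by rewrite bin_small // !muln0.
rewrite expnS IHk big_distrr /=.
under eq_bigr => l _ do rewrite mulnCA mul_bin mulnDr.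
rewrite big_split /=.
have -> : (\sum_(l < k.+2) surj k.+1 l * 'C(j, l) =
    \sum_(l < k.+2) l * surj k l * 'C(j, l) + \sum_(l < k.+2) l * surj k l.-1 * 'C(j, l))%N.
  by rewrite -big_split; apply: eq_bigr => l _ /=; rewrite -mulnDl mulnDr.
congr (_ + _)%N.
  rewrite [in RHS]big_ord_recr /= surj_eq0 // muln0 mul0n addn0.
  by apply: eq_bigr => l _; rewrite mulnCA mulnA.
by rewrite big_ord_recl /= mul0n add0n; apply: eq_bigr => l _; rewrite mulnCA mulnA.
Qed.

Lemma Li_comp_neg_binom_series k n : (0 < k)%N ->
  Li_comp (- k%:Z) X n = \sum_(l < k) (surj k l.+1)%:R * binom_series l.+1 n.
Proof.
case: k => // k _.
have -> : Li_comp (- k.+1%:Z) X n = fps_series (fun j => j%:R ^+ k.+1) (fps_pow X) n.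
  rewrite /Li_comp /fps_series -(big_mkord xpredT (fun j => j%:R ^+ k.+1 * fps_pow X j n)).
  rewrite big_ltn // expr0n mul0r add0r.
  by apply: eq_bigr => j _; rewrite opprK.
rewrite (@eq_fps_series _ (fun j => \sum_(l < k.+2) (surj k.+1 l)%:R * 'C(j, l)%:R)).
  by rewrite fps_series_sum big_ord_recl mul0r add0r.
by move=> j; rewrite -natrX expn_surj_binomial natr_sum; apply: eq_bigr => l _; rewrite natrM.
Qed.

Definition polyBernC_egf (k : nat) : fps :=
  fun n => \sum_(l < k) (surj k l.+1)%:R * binom_series l n.

Lemma polyBernC_egf_mul_expm1 k n : (0 < k)%N ->
  fps_mul (polyBernC_egf k) expm1 n = Li_comp (- k%:Z) X n.
Proof.
move=> k_gt0; rewrite Li_comp_neg_binom_series // /fps_mul.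
under eq_bigr => i _ do rewrite mulr_suml.
rewrite exchange_big; apply: eq_bigr => l _.
rewrite binom_seriesS fps_mulC /fps_mul mulr_sumr.
by apply: eq_bigr => i _; rewrite mulrA.
Qed.

Lemma fps_div_v1_eq f g h : g 0%N = 0 -> g 1%N = 1 ->
  (forall n, fps_mul h g n.+1 = f n.+1) -> fps_div_v1 f g =1 h.
Proof.
move=> g0 g1 hgf n; rewrite /fps_div_v1.
suff -> : div_v1_seq f g n = mkseq h n.+1 by rewrite nth_mkseq.
elim: n => [|n IHn].
  by rewrite /= g1 divr1 -hgf /fps_mul big_ord_recr big_ord1 /= g0 g1 mulr0 addr0 mulr1.
rewrite [div_v1_seq f g n.+1]/= IHn [mkseq h n.+2]mkseqS; congr (rcons _ _).
rewrite g1 divr1 -hgf /fps_mul big_ord_recr big_ord_recr /= subnn g0 mulr0 addr0.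
rewrite subSnn g1 mulr1.
under [Y in _ - Y]eq_bigr => i _ do rewrite nth_mkseq //.
by rewrite addrAC subrr add0r.
Qed.

Lemma polyBernCE k n : (0 < k)%N ->
  polyBernC (- k%:Z) n = n`!%:R * polyBernC_egf k n.
Proof.
move=> k_gt0; rewrite /polyBernC (@fps_div_v1_eq _ _ (polyBernC_egf k)) // => m.
exact: polyBernC_egf_mul_expm1.
Qed.

Definition exp_comb (s : seq (int * nat)) : fps :=
  fun n => \sum_(x <- s) x.1%:~R * expser x.2%:R n.

Definition int_exp_comb (f : fps) := exists s, f = exp_comb s.

Lemma int_exp_comb_expser (a : nat) : int_exp_comb (expser a%:R).
Proof.
exists [:: (1%:Z, a)].
by apply: functional_extensionality => n; rewrite /exp_comb big_seq1 mul1r.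
Qed.

Lemma int_exp_comb0 : int_exp_comb (fun _ => 0).
Proof. by exists [::]; apply: functional_extensionality => n; rewrite /exp_comb big_nil. Qed.

Lemma int_exp_combD f g : int_exp_comb f -> int_exp_comb g ->
  int_exp_comb (fun n => f n + g n).
Proof.
move=> [s ->] [t ->]; exists (s ++ t).
by apply: functional_extensionality => n; rewrite /exp_comb big_cat.
Qed.

Lemma int_exp_combZ (c : int) f : int_exp_comb f -> int_exp_comb (fun n => c%:~R * f n).
Proof.
move=> [s ->]; exists [seq (c * x.1, x.2) | x <- s].
apply: functional_extensionality => n; rewrite /exp_comb big_map mulr_sumr.
by apply: eq_bigr => x _; rewrite intrM mulrA.
Qed.

Lemma int_exp_combB f g : int_exp_comb f -> int_exp_comb g ->
  int_exp_comb (fun n => f n - g n).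
Proof.
move=> comb_f /(int_exp_combZ (-1)) comb_g.
have -> : (fun n => f n - g n) = (fun n => f n + (-1)%:~R * g n).
  by apply: functional_extensionality => n; rewrite mulrN1z mulN1r.
exact: int_exp_combD.
Qed.

Lemma int_exp_comb_sum K (F : nat -> fps) : (forall l, int_exp_comb (F l)) ->
  int_exp_comb (fun n => \sum_(l < K) F l n).
Proof.
move=> comb_F; elim: K => [|K IHK].
  have -> : (fun n => \sum_(l < 0) F l n) = (fun _ => 0).
    by apply: functional_extensionality => n; rewrite big_ord0.
  exact: int_exp_comb0.
have -> : (fun n => \sum_(l < K.+1) F l n) = (fun n => \sum_(l < K) F l n + F K n).
  by apply: functional_extensionality => n; rewrite big_ord_recr.
exact: int_exp_combD.
Qed.

Lemma int_exp_comb_mul_expser (b : nat) f : int_exp_comb f ->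
  int_exp_comb (fps_mul (expser b%:R) f).
Proof.
move=> [s ->]; exists [seq (x.1, (x.2 + b)%N) | x <- s].
apply: functional_extensionality => n; rewrite fps_mulC /fps_mul /exp_comb big_map.
rewrite (eq_bigr _ (fun i _ => mulr_suml _ _ _ _)).
rewrite exchange_big; apply: eq_bigr => x _ /=.
by rewrite natrD -expserD /fps_mul mulr_sumr; apply: eq_bigr => i _; rewrite -mulrA.
Qed.

Lemma int_exp_comb_binom_series l : int_exp_comb (binom_series l).
Proof.
elim: l => [|l IHl]; first by rewrite binom_series0; exact: (int_exp_comb_expser 1).
rewrite binom_seriesS expm1E fps_mulBl fps_mul1.
by apply: int_exp_combB => //; exact: (int_exp_comb_mul_expser 1).
Qed.

Lemma int_exp_comb_polyBernC_egf k : int_exp_comb (polyBernC_egf k).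
Proof.
apply: (@int_exp_comb_sum k (fun l n => (surj k l.+1)%:R * binom_series l n)) => l.
exact (int_exp_combZ (surj k l.+1)%:Z _ (int_exp_comb_binom_series l)).
Qed.

Lemma int_exp_comb_coef_eq_mod f (P n m : nat) : int_exp_comb f ->
  (forall a, a ^ n = a ^ m %[mod P])%N ->
  exists z : int, n`!%:R * f n - m`!%:R * f m = P%:R * z%:~R.
Proof.
move=> [s ->] eq_pow; rewrite /exp_comb !mulr_sumr -sumrB.
have coefE x i : i`!%:R * (x.1%:~R * expser x.2%:R i) = x.1%:~R * (x.2 ^ i)%:R :> rat.
  by rewrite /expser natrX mulrCA; congr (_ * _); rewrite mulrCA mulfV ?mulr1 ?fact_rat_neq0.
rewrite (eq_bigr (fun x => x.1%:~R * ((x.2 ^ n)%:R - (x.2 ^ m)%:R))) => [|x _]; last first.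
  by rewrite !coefE mulrBr.
elim: s => [|x s [z IHs]]; first by exists 0; rewrite big_nil mulr0.
have [q eq_q] : exists q : int, ((x.2 ^ n)%:R - (x.2 ^ m)%:R : rat) = P%:R * q%:~R.
  exists ((x.2 ^ n %/ P)%:Z - (x.2 ^ m %/ P)%:Z).
  rewrite {1}(divn_eq (x.2 ^ n) P) {1}(divn_eq (x.2 ^ m) P) eq_pow.
  by rewrite !natrD !natrM intrB !pmulrn; ring.
by exists (x.1 * q + z); rewrite big_cons IHs eq_q intrD intrM; ring.
Qed.

Section EulerTotient.
Local Open Scope nat_scope.

Lemma expn_eq_mod_totient (p N n m a : nat) : prime p -> N <= n -> N <= m ->
  n = m %[mod totient (p ^ N)] -> a ^ n = a ^ m %[mod p ^ N].
Proof.
move=> p_pr le_Nn le_Nm eq_nm.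
have [p_dvd_a | p_ndvd_a] := boolP (p %| a).
  have pow_mod0 i : N <= i -> a ^ i %% p ^ N = 0.
    move=> le_Ni; apply/eqP; rewrite -/(dvdn _ _).
    exact: dvdn_trans (dvdn_exp2r N p_dvd_a) (dvdn_exp2l a le_Ni).
  by rewrite !pow_mod0.
have a_coprime : coprime a (p ^ N) by rewrite coprimeXr // coprime_sym prime_coprime.
have a_totient := Euler_exp_totient a_coprime.
have pow_mod i : a ^ i = a ^ (i %% totient (p ^ N)) %[mod p ^ N].
  rewrite {1}(divn_eq i (totient (p ^ N))) expnD (mulnC (i %/ _)) expnM.
  by rewrite -modnMml -modnXm a_totient modnXm exp1n modnMml mul1n.
by rewrite pow_mod eq_nm -pow_mod.
Qed.

End EulerTotient.

Theorem theorem2p5 (p k N n m : nat) :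
  prime p -> (0 < k)%N -> (0 < N)%N -> (N <= n)%N -> (N <= m)%N ->
  n = m %[mod totient (p ^ N)] ->
  exists z : int,
    polyBernC (- (k%:Z)) n - polyBernC (- (k%:Z)) m = (p ^ N)%:R * z%:~R.
Proof.
move=> p_pr k_gt0 _ le_Nn le_Nm eq_nm.
rewrite !polyBernCE //.
apply: int_exp_comb_coef_eq_mod (int_exp_comb_polyBernC_egf k) _ => a.
exact: expn_eq_mod_totient.
Qed.
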